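(* Neither $\mathbf{X}_6$ nor $\mathbf{X}_7$ is mutation-equivalent to any of the nine graphs $\mathbf{E}_6,\mathbf{E}_7,\mathbf{E}_8,\widehat{\mathbf{E}}_6,\widehat{\mathbf{E}}_7,\widehat{\mathbf{E}}_8,\mathbf{E}_6^{(1,1)},\mathbf{E}_7^{(1,1)},\mathbf{E}_8^{(1,1)}$.
   Context: A graph here is a finite directed multigraph with no loops and no oriented $2$-cycles; multiple arrows in the same direction are allowed. The mutation $\mu_k\Gamma$ at a vertex $k$: for every pair of arrows $i\to k$, $k\to j$ add an arrow $i\to j$; reverse all arrows incident to $k$; then delete pairs of opposite arrows $i\to j$, $j\to i$ until no oriented $2$-cycles remain. Two graphs are mutation-equivalent if one is obtained from the other by a sequence of mutations and a relabeling of vertices. $\mathbf{X}_6$: vertices $x,w,y_1,z_1,y_2,z_2$; for $i=1,2$: two arrows $y_i\to z_i$, one arrow $z_i\to x$, one arrow $x\to y_i$; plus one arrow $w\to x$. $\mathbf{X}_7$: vertices $x,y_i,z_i$ ($i=1,2,3$); for each $i=1,2,3$: two arrows $y_i\to z_i$, one arrow $z_i\to x$, one arrow $x\to y_i$. For positive integers $a,b,c$ let $T(a,b,c)$ be the tree consisting of a central vertex $o$ and three paths (arms) attached to $o$ with $a$, $b$, $c$ further vertices respectively, every arrow being a single arrow directed toward $o$ (i.e. an arm $v_m\to v_{m-1}\to\cdots\to v_1\to o$). Then $\mathbf{E}_6=T(1,2,2)$, $\mathbf{E}_7=T(1,2,3)$, $\mathbf{E}_8=T(1,2,4)$, $\widehat{\mathbf{E}}_6=T(2,2,2)$,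 $\widehat{\mathbf{E}}_7=T(1,3,3)$, $\widehat{\mathbf{E}}_8=T(1,2,5)$. For nonnegative integers $(k_1,k_2,k_3)$ let $S(k_1,k_2,k_3)$ be the graph with vertices $a,b,p_1,p_2,p_3$ and, for each $i$, vertices $t^{(i)}_1,\dots,t^{(i)}_{k_i}$, with arrows: two arrows $b\to a$; for each $i$ a single arrow $a\to p_i$ and a single arrow $p_i\to b$; and single arrows $t^{(i)}_{k_i}\to\cdots\to t^{(i)}_1\to p_i$. Then $\mathbf{E}_6^{(1,1)}=S(1,1,1)$, $\mathbf{E}_7^{(1,1)}=S(2,0,2)$, $\mathbf{E}_8^{(1,1)}=S(1,0,4)$. *)

From mathcomp Require Import all_boot.
From Stdlib Require List.
Set Implicit Arguments. Unset Strict Implicit. Unset Printing Implicit Defensive.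

(* A (multi)graph on the vertex set 'I_n: Q i j = number of arrows i -> j.
   Graphs in the paper satisfy Q i i = 0 and (Q i j = 0 \/ Q j i = 0). *)
Definition quiver (n : nat) := 'I_n -> 'I_n -> nat.

Definition is_graph n (Q : quiver n) : Prop :=
  (forall i, Q i i = 0) /\ (forall i j, Q i j = 0 \/ Q j i = 0).

(* Mutation at k, literally: for i, j <> k add Q i k * Q k j arrows i -> j,
   reverse arrows at k, then cancel opposite pairs (truncated subtraction
   = number of i -> j arrows left after cancelling). *)
Definition mutate n (k : 'I_n) (Q : quiver n) : quiver n :=
  fun i j =>
    if (i == k) || (j == k) then Q j i
    else (Q i j + Q i k * Q k j) - (Q j i + Q j k * Q k i).

Definition mutate_seq n (ks : seq 'I_n) (Q : quiver n) : quiver n :=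
  foldl (fun P k => mutate k P) Q ks.

Definition pquiver := {n : nat & quiver n}.

Definition mutation_equivalent (G H : pquiver) : Prop :=
  exists (ks : seq 'I_(projT1 G)) (f : 'I_(projT1 H) -> 'I_(projT1 G)),
    bijective f /\
    forall i j, projT2 H i j = mutate_seq ks (projT2 G) (f i) (f j).

Definition of_arrows (n : nat) (s : seq (nat * nat)) : pquiver :=
  existT _ n (fun i j : 'I_n => count (pred1 (val i, val j)) s).

(* An arm v_l -> ... -> v_1 -> o with v_m numbered s + m. *)
Definition arm (s l o : nat) : seq (nat * nat) :=
  if l is 0 then [::]
  else (s.+1, o) :: [seq (s + m.+2, s + m.+1) | m <- iota 0 (l.-1)].

(* T(a,b,c): centre o = 0, arms numbered consecutively. *)
Definition Tgraph (a b c : nat) : pquiver :=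
  of_arrows (1 + a + b + c) (arm 0 a 0 ++ arm a b 0 ++ arm (a + b) c 0).

(* S(k1,k2,k3): a = 0, b = 1, p_i = i + 1, tails after. *)
Definition Sgraph (k1 k2 k3 : nat) : pquiver :=
  of_arrows (5 + k1 + k2 + k3)
    ([:: (1, 0); (1, 0); (0, 2); (2, 1); (0, 3); (3, 1); (0, 4); (4, 1)]
     ++ arm 4 k1 2 ++ arm (4 + k1) k2 3 ++ arm (4 + k1 + k2) k3 4).

(* X6: x=0, w=1, y1=2, z1=3, y2=4, z2=5. *)
Definition X6 : pquiver :=
  of_arrows 6 [:: (2, 3); (2, 3); (3, 0); (0, 2);
                  (4, 5); (4, 5); (5, 0); (0, 4); (1, 0)].

(* X7: x=0, y1=1, z1=2, y2=3, z2=4, y3=5, z3=6. *)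
Definition X7 : pquiver :=
  of_arrows 7 [:: (1, 2); (1, 2); (2, 0); (0, 1);
                  (3, 4); (3, 4); (4, 0); (0, 3);
                  (5, 6); (5, 6); (6, 0); (0, 5)].

Definition E6 := Tgraph 1 2 2.
Definition E7 := Tgraph 1 2 3.
Definition E8 := Tgraph 1 2 4.
Definition E6hat := Tgraph 2 2 2.
Definition E7hat := Tgraph 1 3 3.
Definition E8hat := Tgraph 1 2 5.
Definition E6_11 := Sgraph 1 1 1.
Definition E7_11 := Sgraph 2 0 2.
Definition E8_11 := Sgraph 1 0 4.

From mathcomp Require Import all_boot all_algebra zify.
From Stdlib Require List.
Import GRing.Theory.
Set Implicit Arguments. Unset Strict Implicit. Unset Printing Implicit Defensive.
Local Open Scope ring_scope.

(* Over F_2, mutation at k acts on the symmetrised adjacency matrix A as the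
   congruence A |-> P^T A P, where P is the identity with row k replaced by
   the arrows leaving k; hence the F_2-rank of A cannot grow under mutation
   or relabeling.  For X6 and X7 this matrix is the star centred at x, of
   rank 2, whereas each of the nine E-type graphs has three vertex pairs
   carrying a 3x3 identity submatrix. *)

Lemma natr_Fp2_mod2 (m n : nat) : (m %% 2 = n %% 2)%N -> (m%:R : 'F_2) = n%:R.
Proof. by move=> h; rewrite -(Fp_nat_mod (erefl true : prime 2) m) h Fp_nat_mod. Qed.

Lemma big_pivot_row (R : pzRingType) n (k i : 'I_n) (u : R) (f : 'I_n -> R) :
  \sum_a (if a == k then u else (a == i)%:R) * f a
  = u * f k + (if i == k then 0 else f i).
Proof.
rewrite (bigD1 k) //= eqxx; congr (_ + _); have [->|ik] := eqVneq i k.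
  by rewrite big1 // => a /negPf ->; rewrite mul0r.
rewrite (bigD1 i ik) /= (negPf ik) eqxx mul1r big1 ?addr0 //.
by move=> a /andP[/negPf -> /negPf ->]; rewrite mul0r.
Qed.

Lemma mxrank_mxsub (F : fieldType) m1 n1 m2 n2 (f : 'I_m2 -> 'I_m1)
    (g : 'I_n2 -> 'I_n1) (A : 'M[F]_(m1, n1)) :
  (\rank (mxsub f g A) <= \rank A)%N.
Proof.
have -> : mxsub f g A = rowsub f 1%:M *m A *m colsub g 1%:M.
  by rewrite mul_rowsub_mx mul1mx mulmx_colsub mulmx1 -mxsubcr.
apply: leq_trans (mxrankM_maxl _ _) _; exact: mxrankM_maxr.
Qed.

Lemma mxrank_unit_mxsub (F : fieldType) m n (A : 'M[F]_n)
    (f g : 'I_m -> 'I_n) :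
  mxsub f g A = 1%:M -> (m <= \rank A)%N.
Proof. by move=> fgA; rewrite -[m](mxrank1 F) -fgA mxrank_mxsub. Qed.

Lemma mxrank_star_le2 (F : fieldType) n (A : 'M[F]_n) :
  (forall i j : 'I_n, A i j = ((val i == 0%N) != (val j == 0%N))%:R) ->
  (\rank A <= 2)%N.
Proof.
move=> Astar.
pose u : 'cV[F]_n := \col_i (val i == 0%N)%:R.
pose v : 'cV[F]_n := \col_i (val i != 0%N)%:R.
have -> : A = row_mx u v *m col_mx v^T u^T.
  apply/matrixP => i j; rewrite mul_row_col Astar !mxE !big_ord1 !mxE.
  by case: (val i == 0%N); case: (val j == 0%N);
    rewrite /= ?(mulr0, mul0r, mulr1, addr0, add0r).
exact: leq_trans (mxrankM_maxl _ _) (rank_leq_col _).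
Qed.

Lemma mem_iota_ord n (i : 'I_n) : (val i \in iota 0 n).
Proof. by rewrite mem_iota add0n ltn_ord. Qed.

Section MutationMod2.

Variable n : nat.
Implicit Types (Q : quiver n) (k : 'I_n) (M : 'M['F_2]_n).

Definition adj_mod2 Q : 'M['F_2]_n := \matrix_(i, j) (Q i j + Q j i)%:R.

Definition mutation_mx k Q : 'M['F_2]_n :=
  \matrix_(a, b) if a == k then (if b == k then 1 else (Q k b)%:R)
                 else (a == b)%:R.

Lemma mul_tr_mutation_mx k Q M i j :
  ((mutation_mx k Q)^T *m M) i j =
  (if i == k then 1 else (Q k i)%:R) * M k j + (if i == k then 0 else M i j).
Proof. rewrite mxE; under eq_bigr => a _ do rewrite !mxE; exact: big_pivot_row. Qed.

Lemma mul_mutation_mx k Q M i j :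
  (M *m mutation_mx k Q) i j =
  (if j == k then 1 else (Q k j)%:R) * M i k + (if j == k then 0 else M i j).
Proof.
rewrite mxE; under eq_bigr => a _ do rewrite !mxE mulrC; exact: big_pivot_row.
Qed.

(* Off k, the truncated differences of [mutate] satisfy (a - b) + (b - a) = |a - b|,
   which has the parity of a + b; no graph hypothesis on Q is needed. *)
Lemma adj_mod2_mutate k Q :
  adj_mod2 (mutate k Q) = (mutation_mx k Q)^T *m adj_mod2 Q *m mutation_mx k Q.
Proof.
apply/matrixP => i j; rewrite mul_mutation_mx !mul_tr_mutation_mx !mxE /mutate.
have [->|ik] := eqVneq i k; have [->|jk] := eqVneq j k;
  rewrite /= ?eqxx ?(negPf ik) ?(negPf jk) /= ?mul1r ?addr0.
all: rewrite -?natrM -?natrD -?natrM -?natrD; apply: natr_Fp2_mod2; nia.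
Qed.

Lemma mxrank_adj_mod2_mutate k Q :
  (\rank (adj_mod2 (mutate k Q)) <= \rank (adj_mod2 Q))%N.
Proof.
rewrite adj_mod2_mutate; apply: leq_trans (mxrankM_maxl _ _) _.
exact: mxrankM_maxr.
Qed.

Lemma mxrank_adj_mod2_mutate_seq ks Q :
  (\rank (adj_mod2 (mutate_seq ks Q)) <= \rank (adj_mod2 Q))%N.
Proof.
elim: ks Q => [|k ks IHks] Q //=.
exact: leq_trans (IHks _) (mxrank_adj_mod2_mutate _ _).
Qed.

End MutationMod2.

Lemma mutation_equivalent_mxrank G H :
  mutation_equivalent G H ->
  (\rank (adj_mod2 (projT2 H)) <= \rank (adj_mod2 (projT2 G)))%N.
Proof.
case=> ks [f [_ Hf]].
have -> : adj_mod2 (projT2 H) = mxsub f f (adj_mod2 (mutate_seq ks (projT2 G))).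
  by apply/matrixP => i j; rewrite !mxE !Hf.
exact: leq_trans (mxrank_mxsub _ _ _) (mxrank_adj_mod2_mutate_seq _ _).
Qed.

Definition edge_parity (s : seq (nat * nat)) (a b : nat) : nat :=
  (count (pred1 (a, b)) s + count (pred1 (b, a)) s) %% 2.

Lemma adj_mod2_of_arrowsE n s (i j : 'I_n) :
  adj_mod2 (projT2 (of_arrows n s)) i j = (edge_parity s i j)%:R.
Proof. by rewrite mxE /edge_parity Fp_nat_mod. Qed.

Lemma of_arrows_mxrank_star n s :
  all (fun a => all (fun b => edge_parity s a b == ((a == 0) != (b == 0)))%N
                    (iota 0 n)) (iota 0 n) ->
  (\rank (adj_mod2 (projT2 (of_arrows n s))) <= 2)%N.
Proof.
move=> /allP star_s; apply: mxrank_star_le2 => i j.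
rewrite adj_mod2_of_arrowsE.
have /allP /(_ j) := star_s i (mem_iota_ord i).
by rewrite mem_iota_ord => /(_ isT) /eqP ->.
Qed.

Lemma of_arrows_mxrank_ge n s m (r c : seq nat) :
  all (fun x => x < n.+1)%N r -> all (fun x => x < n.+1)%N c ->
  all (fun a => all (fun b => edge_parity s (nth 0 r a) (nth 0 c b) == (a == b))%N
                    (iota 0 m)) (iota 0 m) ->
  (m <= \rank (adj_mod2 (projT2 (of_arrows n.+1 s))))%N.
Proof.
have nth_lt t a : all (fun x => x < n.+1)%N t -> (nth 0 t a < n.+1)%N.
  by move=> /all_nthP lt_t; have [/lt_t|/(nth_default 0)->] := ltnP a (size t).
move=> /(nth_lt r) lt_r /(nth_lt c) lt_c /allP match_rc.
apply: (@mxrank_unit_mxsub _ _ _ _ (fun a => inord (nth 0 r a))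
          (fun b => inord (nth 0 c b))).
apply/matrixP => a b; rewrite mxE adj_mod2_of_arrowsE mxE !inordK //.
have /allP /(_ b) := match_rc a (mem_iota_ord a).
by rewrite mem_iota_ord => /(_ isT) /eqP ->.
Qed.

Lemma mxrank_adj_mod2_X G :
  List.In G [:: X6; X7] -> (\rank (adj_mod2 (projT2 G)) <= 2)%N.
Proof. by case=> [<-|[<-|[]]]; apply: of_arrows_mxrank_star. Qed.

(* Each witness (r, c) lists three edges r_a -- c_a forming an induced matching. *)
Lemma mxrank_adj_mod2_E H :
  List.In H [:: E6; E7; E8; E6hat; E7hat; E8hat; E6_11; E7_11; E8_11] ->
  (3 <= \rank (adj_mod2 (projT2 H)))%N.
Proof.
case=> [<-|[<-|[<-|[<-|[<-|[<-|[<-|[<-|[<-|[]]]]]]]]]].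
- exact: (@of_arrows_mxrank_ge 5 _ _ [:: 1; 3; 5] [:: 0; 2; 4]).
- exact: (@of_arrows_mxrank_ge 6 _ _ [:: 1; 3; 5] [:: 0; 2; 4]).
- exact: (@of_arrows_mxrank_ge 7 _ _ [:: 1; 3; 5] [:: 0; 2; 4]).
- exact: (@of_arrows_mxrank_ge 6 _ _ [:: 2; 4; 6] [:: 1; 3; 5]).
- exact: (@of_arrows_mxrank_ge 7 _ _ [:: 1; 3; 6] [:: 0; 2; 5]).
- exact: (@of_arrows_mxrank_ge 8 _ _ [:: 1; 3; 5] [:: 0; 2; 4]).
- exact: (@of_arrows_mxrank_ge 7 _ _ [:: 5; 6; 7] [:: 2; 3; 4]).
- exact: (@of_arrows_mxrank_ge 8 _ _ [:: 6; 8; 0] [:: 5; 7; 3]).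
- exact: (@of_arrows_mxrank_ge 9 _ _ [:: 5; 9; 6] [:: 2; 8; 4]).
Qed.

Theorem mainTheorem2 :
  forall G H : pquiver,
    List.In G [:: X6; X7] ->
    List.In H [:: E6; E7; E8; E6hat; E7hat; E8hat; E6_11; E7_11; E8_11] ->
    ~ mutation_equivalent G H.
Proof.
move=> G H /mxrank_adj_mod2_X rankG /mxrank_adj_mod2_E rankH
  /mutation_equivalent_mxrank rankHG.
by have := leq_trans rankH (leq_trans rankHG rankG).
Qed.
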